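(* $\bigcup_k\mathfrak{L}(\mathrm{rtDVA}(k))\subseteq\mathsf{TISP}(n^3,n)$.
   Context: $\mathfrak{L}(A)$ denotes the class of languages recognized by machines of type $A$; the union ranges over $k\ge1$. $\mathsf{TISP}(n^3,n)$ is the class of languages decidable by a deterministic Turing machine that simultaneously uses time $O(n^3)$ and space $O(n)$ on inputs of length $n$. A real-time deterministic vector automaton of dimension $k$ ($\mathrm{rtDVA}(k)$) is a 6-tuple $(Q,\Sigma,\delta,q_0,Q_a,v)$ with finite state set $Q$, initial state $q_0$, accept states $Q_a$, initial row vector $v\in\mathbb{Q}^k$ (freely chosen), and $\delta:Q\times(\Sigma\cup\{\cent,\$\})\times\{=,\neq\}\to Q\times S$, $S$ the set of $k\times k$ rational matrices. The input $w$ is read as $\cent w\$$ left to right, one symbol per step; in state $q$ reading $\sigma$, with $\omega$ equal to ''$=$'' iff the first vector entry equals $1$, if $\delta(q,\sigma,\omega)=(q',M)$ the machine goes to $q'$ and multiplies its row vector on the right by $M$. Acceptance: after processing $\$$, the state is in $Q_a$ and the first vector entry equals $1$. *)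

From mathcomp Require Import all_boot all_order all_algebra.
Set Implicit Arguments. Unset Strict Implicit. Unset Printing Implicit Defensive.
Import GRing.Theory Num.Theory.
Local Open Scope ring_scope.

Inductive tsym (Sigma : Type) := Cent | Dollar | Letter of Sigma.
Arguments Cent {Sigma}. Arguments Dollar {Sigma}.

(* rtDVA of dimension k.  The boolean argument of the transition is
   omega: true  <-> "=" (first vector entry equals 1). *)
Record rtDVA (Sigma : Type) (k : nat) := {
  dQ : finType;
  ddelta : dQ -> tsym Sigma -> bool -> dQ * 'M[rat]_k;
  dq0 : dQ;
  dacc : {pred dQ};
  dv : 'rV[rat]_k
}.

Section DVA.
Variables (Sigma : Type) (k : nat) (A : rtDVA Sigma k.+1).

Definition first_entry (v : 'rV[rat]_k.+1) : rat := v ord0 ord0.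

Definition dva_step (c : dQ A * 'rV[rat]_k.+1) (s : tsym Sigma)
  : dQ A * 'rV[rat]_k.+1 :=
  let: (q, v) := c in
  let: (q', M) := ddelta q s (first_entry v == 1) in (q', v *m M).

Definition dva_run (w : seq Sigma) : dQ A * 'rV[rat]_k.+1 :=
  foldl dva_step (dq0 A, dv A) (Cent :: rcons (map (@Letter Sigma) w) Dollar).

Definition dva_lang (w : seq Sigma) : Prop :=
  let: (q, v) := dva_run w in (q \in @dacc Sigma k.+1 A) /\ first_entry v = 1.
End DVA.

Inductive move := MLeft | MStay | MRight.

Record DTM (Sigma : Type) := {
  tQ : finType;
  tG : finType;
  ntapes : nat;
  tblank : tG;
  tinput : Sigma -> tG;
  tstart : tQ;
  tacc : tQ;
  trej : tQ;
  tdelta : tQ -> ('I_ntapes -> tG) -> tQ * ('I_ntapes -> tG) * ('I_ntapes -> move)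
}.

Section TM.
Variables (Sigma : Type) (M : DTM Sigma).

Record config := Config {
  cstate : tQ M;
  ctape : 'I_(ntapes M) -> int -> tG M;
  cpos : 'I_(ntapes M) -> int
}.

Definition halting (q : tQ M) : bool := (q == tacc M) || (q == trej M).

Definition move_int (m : move) : int :=
  match m with MLeft => -1 | MStay => 0 | MRight => 1 end.

Definition tm_step (c : config) : config :=
  if halting (cstate c) then c else
  let: (q', wr, mv) := tdelta (cstate c) (fun i => ctape c i (cpos c i)) in
  Config q'
    (fun i z => if z == cpos c i then wr i else ctape c i z)
    (fun i => cpos c i + move_int (mv i)).

Definition tm_init (w : seq Sigma) : config :=
  Config (tstart M)
    (fun i z => if (val i == 0)%N then
                  match z with
                  | Posz j => if (j < size w)%N then
                                 match nth None (map Some w) j with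
                                 | Some a => tinput M a | None => tblank M end
                               else tblank M
                  | Negz _ => tblank M
                  end
                else tblank M)
    (fun _ => 0).

Definition tm_run (w : seq Sigma) (t : nat) : config := iter t tm_step (tm_init w).

Definition decides_in (L : seq Sigma -> Prop) (T S : nat -> nat) : Prop :=
  forall w, exists t, (t <= T (size w))%N /\ halting (cstate (tm_run w t)) /\
    (cstate (tm_run w t) = tacc M <-> L w) /\
    (forall t' i, (t' <= t)%N -> (`|cpos (tm_run w t') i| <= S (size w))%N).
End TM.

Definition TISP_n3_n (Sigma : Type) (L : seq Sigma -> Prop) : Prop :=
  exists (M : DTM Sigma) (c : nat),
    decides_in M L (fun n => c * n ^ 3 + c)%N (fun n => c * n + c)%N.

(* The machine keeps the automaton's state in its finite control and the
   vector on its single tape.  Clearing denominators, the vector reached after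
   [i] transitions is [den ^ i.+1] times an integer vector; it is kept in
   integer registers together with the scale [den ^ i.+1] and a flag register,
   entry 0 minus the scale, which vanishes exactly when the first entry is 1.
   Every transition multiplies the registers by a fixed integer matrix, so they
   stay below [init_bound * growth ^ i].  The tape cells 0 .. n hold each
   register modulo [base ^ n.+1], one base-[base] digit per cell, and the size
   bound makes the flag vanish exactly when its residue does.  A transition is
   one left-to-right sweep whose carries are bounded and live in the state;
   between sweeps the head rewinds and seeks the next unread letter.  Each
   letter thus costs O(n) steps, the whole run O(n^2), and the head never
   leaves the cells -1 .. n. *)

From HB Require Import structures.
From mathcomp Require Import all_boot all_order all_algebra.
From mathcomp Require Import zify ring lra.
Set Implicit Arguments. Unset Strict Implicit. Unset Printing Implicit Defensive.
Import Order.TTheory GRing.Theory Num.Theory.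
Local Open Scope ring_scope.

Lemma big_option (R : nmodType) (T : finType) (F : option T -> R) :
  \sum_(x : option T) F x = F None + \sum_(x : T) F (Some x).
Proof.
rewrite (bigD1 None) //=; congr (_ + _).
rewrite (reindex_omap Some (fun x => x)) /=; last by case.
by apply: eq_bigl => x; rewrite eqxx.
Qed.

Definition numeral (b : int) (d : nat -> int) (m : nat) : int :=
  \sum_(i < m) d i * b ^+ i.

Lemma numeralSr b d m : numeral b d m.+1 = numeral b d m + d m * b ^+ m.
Proof. by rewrite /numeral big_ord_recr. Qed.

Section NumeralDigits.
Variables (b : int) (d : nat -> int).
Hypothesis d_digit : forall i, 0 <= d i < b.

Lemma numeral_ge0 m : 0 <= numeral b d m.
Proof.
apply: sumr_ge0 => i _; have /andP[d_ge0 d_lt] := d_digit i.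
by rewrite mulr_ge0 ?exprn_ge0 ?(le_trans d_ge0 (ltW d_lt)).
Qed.

Lemma numeral_lt m : numeral b d m < b ^+ m.
Proof.
elim: m => [|m IHm]; first by rewrite /numeral big_ord0.
have /andP[dm_ge0 dm_lt] := d_digit m.
have N_ge0 := numeral_ge0 m.
rewrite numeralSr exprSr; nia.
Qed.

Lemma numeralSr_eq0 m :
  (numeral b d m.+1 == 0) = (numeral b d m == 0) && (d m == 0).
Proof.
have /andP[dm_ge0 dm_lt] := d_digit m.
have N_ge0 := numeral_ge0 m.
have P_gt0 : 0 < b ^+ m by apply: le_lt_trans N_ge0 (numeral_lt m).
rewrite numeralSr; apply/eqP/andP => [N0 | [/eqP-> /eqP->]]; last by rewrite mul0r addr0.
by split; apply/eqP; nia.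
Qed.

End NumeralDigits.

Lemma eq0_of_small_congr (V U z P : int) :
  V = U + z * P -> 0 <= V < P -> `|U| < P -> (V == 0) = (U == 0).
Proof.
move=> VE /andP[V_ge0 V_lt]; rewrite ltr_norml => /andP[U_gt U_lt].
apply/eqP/eqP => [V0 | U0].
- have z0 : z = 0 by case: (ltrgt0P z) => // z_sgn; nia.
  by move: VE; rewrite V0 z0 mul0r addr0.
- have z0 : z = 0 by case: (ltrgt0P z) => // z_sgn; nia.
  by rewrite VE U0 z0 mul0r addr0.
Qed.

Lemma divz_carry_bound (t : int) (b s c : nat) : (1 < b)%N -> (s <= c)%N ->
  `|t| <= (b%:Z - 1) * s%:Z + c%:Z -> `|(t %/ b%:Z)%Z| <= c%:Z.
Proof.
move=> b_gt1 s_le_c; rewrite !ler_norml => /andP[t_ge t_le].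
have b_ge2 : 2 <= b%:Z by rewrite lez_nat.
have s_le : s%:Z <= c%:Z by rewrite lez_nat.
have r_ge0 : 0 <= (t %% b%:Z)%Z by rewrite modz_ge0 // eqz_nat; lia.
have r_lt : (t %% b%:Z)%Z < b%:Z by rewrite ltz_pmod // ltz_nat; lia.
have tE := divz_eq t b%:Z.
apply/andP; split; nia.
Qed.

Lemma inord_modzE (b : nat) (t : int) :
  ((inord `|(t %% b.+1%:Z)%Z| : 'I_b.+1) : nat)%:Z = (t %% b.+1%:Z)%Z.
Proof.
have r_ge0 : 0 <= (t %% b.+1%:Z)%Z by apply: modz_ge0.
have r_lt : (t %% b.+1%:Z)%Z < b.+1%:Z by apply: ltz_pmod.
rewrite inordK; first by rewrite abszE ger0_norm.
by rewrite -(@ltr_nat int) !natz abszE ger0_norm.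
Qed.

Section Simulation.
Variables (Sigma : finType) (k : nat) (A : rtDVA Sigma k.+1).

(* A [code] is either a tape mark ([None] blank, [Some None] an input letter
   already read, [Some (Some a)] the unread letter [a]) or the input symbol a
   transition reads ([None] for the left marker, [Some None] for the right one). *)
Definition code := option (option Sigma).

Definition tsym_of (s : code) : tsym Sigma :=
  match s with None => Cent | Some None => Dollar | Some (Some a) => Letter a end.

(* Registers: [Some (Some j)] holds entry [j] of the vector, [Some None] the
   common scale and [None] the flag, entry [0] minus the scale, which vanishes
   exactly when the first entry equals 1. *)
Definition reg := option (option 'I_k.+1).
Definition reg_entry (j : 'I_k.+1) : reg := Some (Some j).
Definition reg_scale : reg := Some None.

Definition with_flag (d : reg -> int) (c : reg) : int :=
  if c is None then d (reg_entry ord0) - d reg_scale else d c.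

Definition trans_key := (dQ A * code * bool)%type.
Definition key_mx (o : trans_key) : 'M[rat]_k.+1 := (ddelta o.1.1 (tsym_of o.1.2) o.2).2.

Definition coef_index := (trans_key * 'I_k.+1 * 'I_k.+1 + 'I_k.+1)%type.
Definition coef (e : coef_index) : rat :=
  match e with inl (o, i, j) => key_mx o i j | inr j => dv A ord0 j end.
Definition den : nat := (\prod_(e : coef_index) `|denq (coef e)|)%N.
Definition clear_den (x : rat) : int := numq x * (den %/ `|denq x|)%N%:Z.

Definition int_mx (o : trans_key) (c' : reg) : reg -> int := with_flag (fun c =>
  match c, c' with
  | Some (Some j), Some (Some i) => clear_den (key_mx o i j)
  | Some None, Some None => den%:Z
  | _, _ => 0
  end).

Definition reg_mul (o : trans_key) (d : reg -> int) (c : reg) : int :=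
  \sum_(c' : reg) d c' * int_mx o c' c.

Definition init_regs : reg -> int := with_flag (fun c =>
  match c with Some (Some j) => clear_den (dv A ord0 j) | Some None => den%:Z | None => 0 end).

Definition growth : nat :=
  (\max_(o : trans_key) \max_(c : reg) \sum_(c' : reg) `|int_mx o c' c|).+1.
Definition init_bound : nat := (\max_(c : reg) `|init_regs c|).+1.

(* After [i] transitions the registers are bounded by [init_bound * growth ^ i];
   the base is chosen so that this fits in [n + 1] digits for [i <= n + 2]. *)
Definition base : nat := (growth * growth * init_bound).+2.

Lemma sum_int_mx_le o c : \sum_(c' : reg) `|int_mx o c' c| <= growth%:Z.
Proof.
have le_growth : (\sum_(c' : reg) `|int_mx o c' c| <= growth)%N.
  apply: leqW; apply: leq_trans (leq_bigmax o).
  exact: (leq_bigmax (F := fun c => \sum_(c' : reg) `|int_mx o c' c|)%N c).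
rewrite (eq_bigr (fun c' => (`|int_mx o c' c|%N)%:R)); last by move=> c' _; rewrite natz abszE.
by rewrite -natr_sum natz lez_nat.
Qed.

Lemma reg_mul_bound o d (X : int) c :
  (forall c', `|d c'| <= X) -> `|reg_mul o d c| <= X * growth%:Z.
Proof.
move=> d_le; have X_ge0 : 0 <= X by apply: le_trans (d_le None).
apply: le_trans (ler_norm_sum _ _ _) _.
apply: le_trans (ler_wpM2l X_ge0 (sum_int_mx_le o c)); rewrite mulr_sumr.
by apply: ler_sum => c' _; rewrite normrM ler_wpM2r.
Qed.

Lemma reg_mul_ext o d1 d2 c : d1 =1 d2 -> reg_mul o d1 c = reg_mul o d2 c.
Proof. by move=> d12; apply: eq_bigr => c' _; rewrite d12. Qed.

Lemma reg_mulD o d1 d2 c :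
  reg_mul o (fun c' => d1 c' + d2 c') c = reg_mul o d1 c + reg_mul o d2 c.
Proof. by rewrite /reg_mul -big_split; apply: eq_bigr => c' _; rewrite mulrDl. Qed.

Lemma reg_mulZ o d a c : reg_mul o (fun c' => a * d c') c = a * reg_mul o d c.
Proof. by rewrite /reg_mul mulr_sumr; apply: eq_bigr => c' _; rewrite mulrA. Qed.

Lemma reg_mul0 o c : reg_mul o (fun=> 0) c = 0.
Proof. by rewrite /reg_mul big1 // => c' _; rewrite mul0r. Qed.

Lemma den_gt0 : (0 < den)%N.
Proof. by apply: prodn_gt0 => e; rewrite absz_gt0 gt_eqF // denq_gt0. Qed.

Lemma clear_denE (x : rat) : (`|denq x| %| den)%N -> (clear_den x)%:~R = den%:R * x :> rat.
Proof.
move=> dvd_x; rewrite /clear_den intrM.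
set d := `|denq x|%N.
have dE : (denq x)%:~R = d%:R :> rat by rewrite /d -[in LHS](gez0_abs (ltW (denq_gt0 x))).
have d_neq0 : d%:R != 0 :> rat by rewrite pnatr_eq0 absz_eq0 gt_eqF ?denq_gt0.
have xE : x = (numq x)%:~R / d%:R by rewrite -dE divq_num_den.
have -> : den%:R = (den %/ d)%:R * d%:R :> rat by rewrite -natrM divnK.
rewrite [in RHS]xE -[((den %/ d)%N%:Z)%:~R]/((den %/ d)%:R).
by field.
Qed.

Lemma clear_den_coef e : (clear_den (coef e))%:~R = den%:R * coef e :> rat.
Proof. by apply: clear_denE; rewrite /den (bigD1 e) //= dvdn_mulr. Qed.

Definition scaled_rep (i : nat) (v : 'rV[rat]_k.+1) (U : reg -> int) :=
  [/\ forall j, (U (reg_entry j))%:~R = den%:R ^+ i.+1 * v ord0 j :> rat,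
      U reg_scale = den%:Z ^+ i.+1,
      U None = U (reg_entry ord0) - U reg_scale &
      forall c, `|U c| <= (init_bound * growth ^ i)%N%:Z].

Lemma scaled_rep_init : scaled_rep 0 (dv A) init_regs.
Proof.
split=> // [j|c]; first by rewrite expr1 (clear_den_coef (inr j)).
rewrite expn0 muln1 -abszE lez_nat; apply: leqW.
exact: (leq_bigmax (F := fun c => `|init_regs c|%N) c).
Qed.

Lemma reg_mul_entry o U j :
  reg_mul o U (reg_entry j) = \sum_(i : 'I_k.+1) U (reg_entry i) * clear_den (key_mx o i j).
Proof. by rewrite /reg_mul !big_option /= !mulr0 !add0r. Qed.

Lemma reg_mul_scale o U : reg_mul o U reg_scale = U reg_scale * den%:Z.
Proof. by rewrite /reg_mul !big_option /= mulr0 add0r big1 ?addr0 // => i _; rewrite mulr0. Qed.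

Lemma reg_mul_flag o U :
  reg_mul o U None = reg_mul o U (reg_entry ord0) - reg_mul o U reg_scale.
Proof. by rewrite /reg_mul -sumrB; apply: eq_bigr => c' _; rewrite mulrBr. Qed.

Lemma scaled_rep_mul i v U o : scaled_rep i v U -> scaled_rep i.+1 (v *m key_mx o) (reg_mul o U).
Proof.
case=> U_entry U_scale _ U_bound; split.
- move=> j; rewrite reg_mul_entry rmorph_sum mxE mulr_sumr; apply: eq_bigr => i' _.
  by rewrite rmorphM /= U_entry (clear_den_coef (inl (o, i', j))) /= !exprS; ring.
- by rewrite reg_mul_scale U_scale [in RHS]exprSr.
- exact: reg_mul_flag.
- move=> c; apply: le_trans (reg_mul_bound o c U_bound) _.
  by rewrite expnS mulnCA -PoszM mulnC.
Qed.

Lemma scaled_rep_flag i v U : scaled_rep i v U -> (U None == 0) = (first_entry v == 1).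
Proof.
case=> U_entry U_scale -> _; rewrite subr_eq0 -(eqr_int rat) U_entry U_scale rmorphXn /=.
have nz : den%:R ^+ i.+1 != 0 :> rat by rewrite expf_neq0 // pnatr_eq0 -lt0n den_gt0.
by rewrite -{2}[den%:R ^+ i.+1]mulr1 (inj_eq (mulfI nz)).
Qed.

Lemma reg_bound_lt (n i : nat) : (i <= n.+2)%N -> (init_bound * growth ^ i < base ^ n.+1)%N.
Proof.
move=> i_le; apply: (@leq_ltn_trans (init_bound * growth ^ n.+2)).
  by rewrite leq_mul2l leq_pexp2l ?orbT.
have growth_le : (growth <= base)%N.
  have growth_gt0 : (0 < growth)%N by [].
  have init_bound_gt0 : (0 < init_bound)%N by [].
  by rewrite /base; nia.
have growth_exp_le e : (growth ^ e <= base ^ e)%N by elim: e => // e IH; rewrite !expnS leq_mul.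
have -> : (init_bound * growth ^ n.+2 = growth ^ n * (growth * growth * init_bound))%N.
  by rewrite !expnS; ring.
rewrite expnSr; apply: (@leq_ltn_trans (base ^ n * (growth * growth * init_bound))).
  by rewrite leq_mul2r growth_exp_le orbT.
by rewrite ltn_pmul2l ?expn_gt0.
Qed.

(* Carries of a sweep stay below [growth], but the first sweep starts with the
   initial registers, of size up to [growth * init_bound], as incoming carries. *)
Definition carry_bound : nat := growth * init_bound.
Definition carry_card : nat := carry_bound.*2.+1.
Definition enc_carry (z : int) : 'I_carry_card := inord `|z + carry_bound%:Z|.
Definition dec_carry (o : 'I_carry_card) : int := (o : nat)%:Z - carry_bound%:Z.

Definition cell := (code * {ffun reg -> 'I_base})%type.
Definition digit_val (x : {ffun reg -> 'I_base}) (c : reg) : int := (x c : nat)%:Z.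
Definition zero_digits : {ffun reg -> 'I_base} := [ffun => ord0].

(* [Sweep q s om fl ka] multiplies the registers by the matrix of the
   transition from [q] on [s] with test outcome [om]; [fl] records whether the
   flag digits written so far are all 0 and [ka] holds the carries.
   [Rewind q om s] walks back to the left end, then sweeps for [s], or seeks
   the next unread letter if [s] is [None]. *)
Inductive state :=
| Sweep of dQ A & code & bool & bool & {ffun reg -> 'I_carry_card}
| Rewind of dQ A & bool & option code
| Seek of dQ A & bool
| Accept
| Reject.

Definition state_enc := ((dQ A * code * bool * bool * {ffun reg -> 'I_carry_card}) +
  (dQ A * bool * option code) + (dQ A * bool) + bool)%type.

Definition enc_state (s : state) : state_enc :=
  match s with
  | Sweep q s om fl ka => inl (inl (inl (q, s, om, fl, ka)))
  | Rewind q om nx => inl (inl (inr (q, om, nx)))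
  | Seek q om => inl (inr (q, om))
  | Accept => inr true
  | Reject => inr false
  end.

Definition dec_state (x : state_enc) : state :=
  match x with
  | inl (inl (inl (q, s, om, fl, ka))) => Sweep q s om fl ka
  | inl (inl (inr (q, om, nx))) => Rewind q om nx
  | inl (inr (q, om)) => Seek q om
  | inr true => Accept
  | inr false => Reject
  end.

Lemma enc_stateK : cancel enc_state dec_state. Proof. by case. Qed.
HB.instance Definition _ := Finite.copy state (can_type enc_stateK).

Definition after_sweep (q : dQ A) (s : code) (om fl : bool) : state :=
  let q' := (ddelta q (tsym_of s) om).1 in
  if s == Some None then (if (q' \in @dacc Sigma k.+1 A) && fl then Accept else Reject)
  else Rewind q' fl None.

Definition sweep_val (o : trans_key) (ds : {ffun reg -> 'I_base})
  (ka : {ffun reg -> 'I_carry_card}) (c : reg) : int :=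
  reg_mul o (digit_val ds) c + dec_carry (ka c).
Definition sweep_digits o ds ka : {ffun reg -> 'I_base} :=
  [ffun c => inord `|(sweep_val o ds ka c %% base%:Z)%Z|].
Definition sweep_carries o ds ka : {ffun reg -> 'I_carry_card} :=
  [ffun c => enc_carry (sweep_val o ds ka c %/ base%:Z)%Z].

Definition after_rewind (q : dQ A) (om : bool) (nx : option code) : state :=
  if nx is Some s then Sweep q s om true [ffun => enc_carry 0] else Seek q om.

Definition sim_delta (st : state) (x : cell) : state * cell * move :=
  let: (mk, ds) := x in
  match st with
  | Sweep q s om fl ka =>
      let o : trans_key := (q, s, om) in
      let nd := sweep_digits o ds ka in
      let fl' := fl && (nd None == ord0) in
      if mk is None then (after_sweep q s om fl', (mk, nd), MLeft)
      else (Sweep q s om fl' (sweep_carries o ds ka), (mk, nd), MRight)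
  | Rewind q om nx =>
      if mk is None then (after_rewind q om nx, x, MRight) else (Rewind q om nx, x, MLeft)
  | Seek q om =>
      match mk with
      | None => (Rewind q om (Some (Some None)), x, MLeft)
      | Some None => (Seek q om, x, MRight)
      | Some (Some a) => (Rewind q om (Some (Some (Some a))), (Some None, ds), MLeft)
      end
  | Accept | Reject => (st, x, MStay)
  end.

Definition init_key : trans_key := (dq0 A, None, first_entry (dv A) == 1).

(* The initial vector enters the first sweep as its incoming carries. *)
Definition init_state : state := Sweep (dq0 A) None (first_entry (dv A) == 1) true
  [ffun c => enc_carry (reg_mul init_key init_regs c)].

Definition sim_TM : DTM Sigma := {|
  tQ := state; tG := (cell : finType); ntapes := 1; tblank := (None, zero_digits);
  tinput := fun a => (Some (Some a), zero_digits);
  tstart := init_state; tacc := Accept; trej := Reject;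
  tdelta := fun s r => let: (s', y, mv) := sim_delta s (r ord0) in (s', fun=> y, fun=> mv) |}.

Definition set_cell (T : int -> cell) (p : int) (y : cell) (z : int) : cell :=
  if z == p then y else T z.

Definition at_cfg (cf : config sim_TM) (s : state) (T : int -> cell) (p : int) :=
  [/\ cstate cf = s, forall i, cpos cf i = p & forall i z, ctape cf i z = T z].

Lemma at_cfg_ext cf s T T' p p' :
  at_cfg cf s T p -> T =1 T' -> p = p' -> at_cfg cf s T' p'.
Proof. by case=> Es Ep Et TT' <-; split=> // i z; rewrite Et TT'. Qed.

Lemma at_cfg_step cf s T p s' y mv : at_cfg cf s T p -> ~~ halting (M := sim_TM) s ->
  sim_delta s (T p) = (s', y, mv) ->
  at_cfg (tm_step cf) s' (set_cell T p y) (p + move_int mv).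
Proof.
case: cf => cs ct cp [/= -> Ep Et] s_nh Edelta.
rewrite /tm_step /= (negbTE s_nh) /= Ep Et Edelta.
by split=> [|i|i z] //=; rewrite ?Ep ?Et.
Qed.

Lemma at_cfg_halted cf s T p : at_cfg cf s T p -> halting (M := sim_TM) s -> tm_step cf = cf.
Proof. by case: cf => cs ct cp [/= -> _ _] s_h; rewrite /tm_step /= s_h. Qed.

Definition carries_ok (ka : {ffun reg -> 'I_carry_card}) :=
  forall c, `|dec_carry (ka c)| <= carry_bound%:Z.

Lemma enc_carryK z : `|z| <= carry_bound%:Z -> dec_carry (enc_carry z) = z.
Proof.
rewrite ler_norml => /andP[z_ge z_le]; rewrite /dec_carry /enc_carry inordK.
  by rewrite abszE ger0_norm ?addrK //; lia.
by rewrite /carry_card ltnS -(@ler_nat int) natz abszE ger0_norm ?natz; lia.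
Qed.

Lemma carries_ok0 : carries_ok [ffun => enc_carry 0].
Proof. by move=> c; rewrite ffunE enc_carryK ?normr0. Qed.

Lemma sweep_val_bound o ds ka c : carries_ok ka ->
  `|sweep_val o ds ka c| <= (base%:Z - 1) * growth%:Z + carry_bound%:Z.
Proof.
move=> ka_ok; apply: le_trans (ler_normD _ _) _; apply: lerD (ka_ok c).
apply: reg_mul_bound => c'; rewrite /digit_val ger0_norm //.
by have := ltn_ord (ds c'); lia.
Qed.

Lemma sweep_quot_bound o ds ka c : carries_ok ka ->
  `|(sweep_val o ds ka c %/ base%:Z)%Z| <= carry_bound%:Z.
Proof.
move=> ka_ok; apply: (divz_carry_bound (s := growth)) => //.
  by rewrite leq_pmulr.
exact: sweep_val_bound.
Qed.

Lemma dec_sweep_carries o ds ka c : carries_ok ka ->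
  dec_carry (sweep_carries o ds ka c) = (sweep_val o ds ka c %/ base%:Z)%Z.
Proof. by move=> ka_ok; rewrite ffunE enc_carryK // sweep_quot_bound. Qed.

Lemma sweep_carries_ok o ds ka : carries_ok ka -> carries_ok (sweep_carries o ds ka).
Proof. by move=> ka_ok c; rewrite dec_sweep_carries // sweep_quot_bound. Qed.

Lemma sweep_divmod o ds ka c : carries_ok ka ->
  digit_val (sweep_digits o ds ka) c + base%:Z * dec_carry (sweep_carries o ds ka c)
  = reg_mul o (digit_val ds) c + dec_carry (ka c).
Proof.
move=> ka_ok; rewrite dec_sweep_carries // /digit_val ffunE inord_modzE.
by rewrite addrC mulrC -divz_eq.
Qed.

Definition tape_num (T : int -> cell) (m : nat) (c : reg) : int :=
  numeral base%:Z (fun i => digit_val (T (Posz i)).2 c) m.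

Lemma digit_val_digit (x : {ffun reg -> 'I_base}) c : 0 <= digit_val x c < base%:Z.
Proof. by rewrite /digit_val ltz_nat ltn_ord. Qed.

Lemma tape_num0 T c : tape_num T 0 c = 0.
Proof. exact: big_ord0. Qed.

Lemma tape_num_ge0 T m c : 0 <= tape_num T m c.
Proof. by apply: numeral_ge0 => i; exact: digit_val_digit. Qed.

Lemma tape_num_lt T m c : tape_num T m c < base%:Z ^+ m.
Proof. by apply: numeral_lt => i; exact: digit_val_digit. Qed.

Lemma tape_num_set T (p : nat) y c :
  tape_num (set_cell T p y) p.+1 c = tape_num T p c + digit_val y.2 c * base%:Z ^+ p.
Proof.
rewrite /tape_num numeralSr /set_cell eqxx; congr (_ + _).
by apply: eq_bigr => i _; rewrite eqz_nat ltn_eqF.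
Qed.

Lemma tape_num_set_eq0 T (p : nat) y :
  (tape_num (set_cell T p y) p.+1 None == 0) = (tape_num T p None == 0) && (y.2 None == ord0).
Proof.
rewrite /tape_num numeralSr_eq0; last by move=> i; exact: digit_val_digit.
rewrite /set_cell eqxx /digit_val eqz_nat; congr ((_ == 0) && _).
by apply: eq_bigr => i _; rewrite eqz_nat ltn_eqF.
Qed.

Lemma tape_num_sweep o T T' (p : nat) ka ka' c : carries_ok ka' ->
  tape_num T' p c + dec_carry (ka' c) * base%:Z ^+ p
    = reg_mul o (tape_num T p) c + dec_carry (ka c) ->
  tape_num T' p c + digit_val (sweep_digits o (T (Posz p)).2 ka') c * base%:Z ^+ p
    + dec_carry (sweep_carries o (T (Posz p)).2 ka' c) * base%:Z ^+ p.+1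
  = reg_mul o (tape_num T p.+1) c + dec_carry (ka c).
Proof.
move=> ka'_ok IH.
have dm := sweep_divmod o (T (Posz p)).2 c ka'_ok.
have -> : reg_mul o (tape_num T p.+1) c
    = reg_mul o (tape_num T p) c + reg_mul o (digit_val (T (Posz p)).2) c * base%:Z ^+ p.
  rewrite (reg_mul_ext _ _ (fun c' => numeralSr _ _ _)) reg_mulD; congr (_ + _).
  by rewrite mulrC -reg_mulZ; apply: reg_mul_ext => c'; rewrite mulrC.
rewrite exprS; nia.
Qed.

Lemma sweep_cells q s om fl ka T cf m :
  at_cfg cf (Sweep q s om fl ka) T 0 -> carries_ok ka ->
  (forall j, (j < m)%N -> (T (Posz j)).1 != None) ->
  exists T' ka',
  [/\ at_cfg (iter m (@tm_step _ sim_TM) cf)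
        (Sweep q s om (fl && (tape_num T' m None == 0)) ka') T' (Posz m),
      carries_ok ka',
      forall z, ~~ (0 <= z < Posz m) -> T' z = T z,
      forall z, (T' z).1 = (T z).1 &
      forall c, tape_num T' m c + dec_carry (ka' c) * base%:Z ^+ m
              = reg_mul (q, s, om) (tape_num T m) c + dec_carry (ka c)].
Proof.
move=> cf_at ka_ok; elim: m => [|m IHm] marks.
  exists T, ka; split=> // [|c]; first by rewrite tape_num0 eqxx andbT.
  by rewrite tape_num0 expr0 mulr1 (reg_mul_ext _ _ (tape_num0 T)) reg_mul0 add0r.
have [|T' [ka' [cf'_at ka'_ok T'_out T'_marks T'_num]]] := IHm.
  by move=> j j_lt; apply: marks; rewrite ltnS ltnW.
have T'm : T' (Posz m) = T (Posz m) by rewrite T'_out // ltxx andbF.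
case Tm : (T (Posz m)) => [mk ds]; rewrite Tm in T'm.
have mk_nb : mk != None by have := marks m (ltnSn m); rewrite Tm.
set nd := sweep_digits (q, s, om) ds ka'.
have delta : sim_delta (Sweep q s om (fl && (tape_num T' m None == 0)) ka') (T' (Posz m))
    = (Sweep q s om (fl && (tape_num T' m None == 0) && (nd None == ord0))
         (sweep_carries (q, s, om) ds ka'), (mk, nd), MRight).
  by rewrite T'm /=; case: mk mk_nb {Tm T'm}.
exists (set_cell T' m (mk, nd)), (sweep_carries (q, s, om) ds ka'); split.
- rewrite iterS tape_num_set_eq0 andbA.
  by apply: at_cfg_ext (at_cfg_step cf'_at isT delta) _ _; rewrite // -addn1 PoszD.
- exact: sweep_carries_ok.
- move=> z z_out; rewrite /set_cell; case: eqP => [zm | _].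
    by move: z_out; rewrite zm ltz_nat ltnSn.
  by apply: T'_out; move: z_out; apply: contra => /andP[-> z_lt]; rewrite (lt_trans z_lt) ?ltz_nat.
- by move=> z; rewrite /set_cell; case: eqP => [-> | _]; rewrite ?Tm.
- by move=> c; rewrite tape_num_set -(tape_num_sweep ka'_ok (T'_num c)) Tm.
Qed.

Lemma sweep_run n q s om fl ka T cf :
  at_cfg cf (Sweep q s om fl ka) T 0 -> carries_ok ka ->
  (forall j, (j < n)%N -> (T (Posz j)).1 != None) -> (T (Posz n)).1 = None ->
  exists T' (kf : reg -> int),
  [/\ at_cfg (iter n.+1 (@tm_step _ sim_TM) cf)
        (after_sweep q s om (fl && (tape_num T' n.+1 None == 0))) T' (Posz n - 1),
      forall z, (T' z).1 = (T z).1 &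
      forall c, tape_num T' n.+1 c + kf c * base%:Z ^+ n.+1
              = reg_mul (q, s, om) (tape_num T n.+1) c + dec_carry (ka c)].
Proof.
move=> cf_at ka_ok marks blank_n.
have [T' [ka' [cf'_at ka'_ok T'_out T'_marks T'_num]]] := sweep_cells cf_at ka_ok marks.
have T'n : T' (Posz n) = T (Posz n) by rewrite T'_out // ltxx andbF.
case Tn : (T (Posz n)) => [mk ds]; rewrite Tn /= in blank_n T'n; subst mk.
set nd := sweep_digits (q, s, om) ds ka'.
have delta : sim_delta (Sweep q s om (fl && (tape_num T' n None == 0)) ka') (T' (Posz n))
    = (after_sweep q s om (fl && (tape_num T' n None == 0) && (nd None == ord0)),
       (None, nd), MLeft) by rewrite T'n.
exists (set_cell T' n (None, nd)), (fun c => dec_carry (sweep_carries (q, s, om) ds ka' c)).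
split.
- rewrite iterS tape_num_set_eq0 andbA.
  exact: at_cfg_ext (at_cfg_step cf'_at isT delta) _ _.
- by move=> z; rewrite /set_cell; case: eqP => [-> | _]; rewrite ?Tn.
- by move=> c; rewrite tape_num_set -(tape_num_sweep ka'_ok (T'_num c)) Tn.
Qed.

Lemma set_cell_id T p : set_cell T p (T p) =1 T.
Proof. by move=> z; rewrite /set_cell; case: eqP => [-> |]. Qed.

Lemma rewind_run q om nx T : (T (-1)).1 = None -> forall m cf,
  at_cfg cf (Rewind q om nx) T (Posz m - 1) ->
  (forall j, (j < m)%N -> (T (Posz j)).1 != None) ->
  at_cfg (iter m.+1 (@tm_step _ sim_TM) cf) (after_rewind q om nx) T 0.
Proof.
move=> blank_left; elim=> [|m IHm] cf cf_at marks.
  case Tl : (T (-1)) blank_left => [mk ds] /= mk_b; subst mk.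
  have delta : sim_delta (Rewind q om nx) (T (Posz 0 - 1)) = (after_rewind q om nx, T (-1), MRight).
    by rewrite Tl.
  exact: at_cfg_ext (at_cfg_step cf_at isT delta) (set_cell_id _ _) _.
have mk_nb := marks m (ltnSn m).
have pos_m : Posz m.+1 - 1 = Posz m by rewrite -addn1 PoszD addrK.
have delta : sim_delta (Rewind q om nx) (T (Posz m)) = (Rewind q om nx, T (Posz m), MLeft).
  by case: (T (Posz m)) mk_nb => [[|] ds].
rewrite pos_m in cf_at; rewrite iterSr; apply: IHm => [|j j_lt].
  exact: at_cfg_ext (at_cfg_step cf_at isT delta) (set_cell_id _ _) _.
by apply: marks; rewrite ltnS ltnW.
Qed.

Definition mark_of (a : option Sigma) : code := if a is Some x then Some (Some x) else None.

Definition consume (T : int -> cell) (m : nat) (a : option Sigma) : int -> cell :=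
  if a is Some _ then set_cell T m (Some None, (T (Posz m)).2) else T.

Lemma seek_run q om (m : nat) (a : option Sigma) T :
  (forall j, (j < m)%N -> (T (Posz j)).1 = Some None) -> (T (Posz m)).1 = mark_of a ->
  forall d j cf, (j + d = m)%N -> at_cfg cf (Seek q om) T (Posz j) ->
  at_cfg (iter d.+1 (@tm_step _ sim_TM) cf) (Rewind q om (Some (Some a)))
    (consume T m a) (Posz m - 1).
Proof.
move=> read mark_m; elim=> [|d IHd] j cf jd cf_at.
  rewrite addn0 in jd; subst j.
  case Tm : (T (Posz m)) mark_m => [mk ds] /= mk_m; subst mk.
  case: a Tm => [x|] Tm /=.
  - have delta : sim_delta (Seek q om) (T (Posz m))
        = (Rewind q om (Some (Some (Some x))), (Some None, ds), MLeft) by rewrite Tm.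
    by apply: at_cfg_ext (at_cfg_step cf_at isT delta) _ _ => // z; rewrite Tm.
  - have delta : sim_delta (Seek q om) (T (Posz m)) = (Rewind q om (Some (Some None)), T m, MLeft).
      by rewrite Tm.
    exact: at_cfg_ext (at_cfg_step cf_at isT delta) (set_cell_id _ _) _.
have j_lt : (j < m)%N by rewrite -jd addnS ltnS leq_addr.
have delta : sim_delta (Seek q om) (T (Posz j)) = (Seek q om, T (Posz j), MRight).
  by case: (T (Posz j)) (read j j_lt) => mk ds /= ->.
rewrite iterSr; apply: (IHd j.+1); first by rewrite addSnnS.
by apply: at_cfg_ext (at_cfg_step cf_at isT delta) (set_cell_id _ _) _; rewrite -addn1 PoszD.
Qed.

Lemma dva_stepE (p : dQ A * 'rV[rat]_k.+1) s :
  dva_step p s = ((ddelta p.1 s (first_entry p.2 == 1)).1,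
                  p.2 *m (ddelta p.1 s (first_entry p.2 == 1)).2).
Proof. by case: p => q v; rewrite /dva_step; case: ddelta. Qed.

Section Input.
Variable w : seq Sigma.
Local Notation n := (size w).

Definition eq_mod_base (f g : reg -> int) :=
  exists zz : reg -> int, forall c, f c = g c + zz c * base%:Z ^+ n.+1.

Definition tape_rep (T : int -> cell) (U : reg -> int) := eq_mod_base (tape_num T n.+1) U.

Definition input_frame (T : int -> cell) := [/\ (T (-1)).1 = None, (T (Posz n)).1 = None &
  forall j, (j < n)%N -> (T (Posz j)).1 != None].

Lemma tape_rep_mul o T U : tape_rep T U ->
  eq_mod_base (fun c => reg_mul o (tape_num T n.+1) c + dec_carry ([ffun=> enc_carry 0] c))
              (reg_mul o U).
Proof.
case=> zz T_U; exists (reg_mul o zz) => c.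
rewrite ffunE enc_carryK ?normr0 // addr0 (reg_mul_ext _ _ T_U) reg_mulD.
by rewrite mulrC -reg_mulZ; congr (_ + _); apply: reg_mul_ext => c'; rewrite mulrC.
Qed.

Lemma sweep_round q s om ka T cf U v i :
  at_cfg cf (Sweep q s om true ka) T 0 -> input_frame T -> carries_ok ka ->
  scaled_rep i v U -> (i < n.+2)%N ->
  eq_mod_base (fun c => reg_mul (q, s, om) (tape_num T n.+1) c + dec_carry (ka c))
              (reg_mul (q, s, om) U) ->
  exists T', [/\ at_cfg (iter n.+1 (@tm_step _ sim_TM) cf)
                   (after_sweep q s om (first_entry (v *m key_mx (q, s, om)) == 1)) T' (Posz n - 1),
                 forall z, (T' z).1 = (T z).1 &
                 tape_rep T' (reg_mul (q, s, om) U)].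
Proof.
move=> cf_at [_ blank_n marks] ka_ok U_rep i_lt [zz T_U].
have [T' [kf [cf'_at T'_marks T'_num]]] := sweep_run cf_at ka_ok marks blank_n.
have T'_U : forall c, tape_num T' n.+1 c
    = reg_mul (q, s, om) U c + (zz c - kf c) * base%:Z ^+ n.+1.
  by move=> c; rewrite mulrBl addrA -T_U -T'_num; ring.
exists T'; split=> //; last by exists (fun c => zz c - kf c).
have U'_rep := scaled_rep_mul (q, s, om) U_rep.
rewrite -(scaled_rep_flag U'_rep) -(eq0_of_small_congr (T'_U None)) //.
  by rewrite tape_num_ge0 tape_num_lt.
case: U'_rep => _ _ _ /(_ None) U'_le; apply: le_lt_trans U'_le _.
have -> : base%:Z ^+ n.+1 = (base ^ n.+1)%N%:Z by rewrite -[base%:Z]natz -natrX natz.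
by rewrite ltz_nat reg_bound_lt.
Qed.

Definition letter (j : nat) : option Sigma := nth None (map Some w) j.

Definition input_marks (m : nat) (z : int) : code :=
  if z is Posz j then
    (if (j < n)%N then (if (j < m)%N then Some None else Some (letter j)) else None)
  else None.

Lemma letter_lt j : (j < n)%N -> exists x, letter j = Some x.
Proof.
rewrite /letter; case: w => [//|a w'] j_lt; exists (nth a (a :: w') j).
by rewrite (nth_map a).
Qed.

Lemma letter_default j : (n <= j)%N -> letter j = None.
Proof. by move=> j_ge; rewrite /letter nth_default ?size_map. Qed.

Lemma input_marks_frame m T : (forall z, (T z).1 = input_marks m z) -> input_frame T.
Proof.
move=> T_marks; split; rewrite ?T_marks //= ?ltnn // => j j_lt.
by rewrite T_marks /= j_lt; case: ifP.
Qed.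

Lemma consume_marks m T : (m <= n)%N -> (forall z, (T z).1 = input_marks m z) ->
  forall z, (consume T m (letter m) z).1 = input_marks m.+1 z.
Proof.
rewrite leq_eqVlt => /orP[/eqP -> | m_lt] T_marks z.
  rewrite letter_default // T_marks.
  by case: z => // j /=; case: ifP => // j_lt; rewrite j_lt ltnS ltnW.
have [x x_m] := letter_lt m_lt; rewrite x_m /consume /set_cell.
case: eqP => [-> | z_neq]; first by rewrite /= m_lt ltnSn.
rewrite T_marks; case: z z_neq => //= j /eqP; rewrite eqz_nat => j_neq.
by rewrite ltnS (leq_eqVlt j m) (negbTE j_neq).
Qed.

Lemma tape_num_consume T m a j c : tape_num (consume T m a) j c = tape_num T j c.
Proof.
apply: eq_bigr => i _; case: a => //= _; rewrite /set_cell.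
by case: eqP => // ->.
Qed.

Definition init_tape (z : int) : cell := ctape (tm_init sim_TM w) ord0 z.

Lemma init_tapeE z : init_tape z = (input_marks 0 z, zero_digits).
Proof.
rewrite /init_tape /=; case: z => [j|j] //=; case: ifP => // j_lt.
by have [x x_j] := letter_lt j_lt; move: x_j; rewrite /letter => ->.
Qed.

Lemma init_cfg : at_cfg (tm_run sim_TM w 0) init_state init_tape 0.
Proof. by split=> // i; rewrite (ord1 i). Qed.

Lemma tape_num_init c : tape_num init_tape n.+1 c = 0.
Proof. by rewrite /tape_num /numeral big1 // => i _; rewrite init_tapeE /digit_val ffunE mul0r. Qed.

Definition dva_prefix (m : nat) : dQ A * 'rV[rat]_k.+1 :=
  foldl (@dva_step _ _ A) (dq0 A, dv A) (Cent :: take m (map (@Letter Sigma) w)).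

Lemma dva_prefixS m x : (m < n)%N -> letter m = Some x ->
  dva_prefix m.+1 = dva_step (dva_prefix m) (Letter x).
Proof.
rewrite /dva_prefix /letter; case: w => [//|a w'] m_lt.
rewrite (take_nth (Letter a)) ?size_map // -rcons_cons foldl_rcons.
by rewrite !(nth_map a) // => -[->].
Qed.

Lemma dva_run_prefix : dva_run A w = dva_step (dva_prefix n) Dollar.
Proof. by rewrite /dva_run /dva_prefix take_oversize ?size_map // -rcons_cons foldl_rcons. Qed.

Lemma tm_runD a t : tm_run sim_TM w (a + t) = iter a (@tm_step _ sim_TM) (tm_run sim_TM w t).
Proof. by rewrite /tm_run iterD. Qed.

(* At time [t] the machine is about to seek letter [m], its tape encoding the
   automaton's configuration after the left marker and the first [m] letters. *)
Definition sim_inv (m t : nat) := exists T U,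
  [/\ at_cfg (tm_run sim_TM w t)
        (Seek (dva_prefix m).1 (first_entry (dva_prefix m).2 == 1)) T 0,
      forall z, (T z).1 = input_marks m z,
      scaled_rep m.+1 (dva_prefix m).2 U & tape_rep T U].

Lemma seek_next q om m t T : (m <= n)%N ->
  at_cfg (tm_run sim_TM w t) (Seek q om) T 0 -> (forall z, (T z).1 = input_marks m z) ->
  at_cfg (tm_run sim_TM w (m.+1 + (m.+1 + t)))
    (Sweep q (Some (letter m)) om true [ffun => enc_carry 0]) (consume T m (letter m)) 0.
Proof.
move=> m_le cf_at T_marks.
have read j : (j < m)%N -> (T (Posz j)).1 = Some None.
  by move=> j_lt; rewrite T_marks /= (leq_trans j_lt m_le) j_lt.
have mark_m : (T (Posz m)).1 = mark_of (letter m).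
  rewrite T_marks /= ltnn; case: ifP => [m_lt | m_nlt]; first by have [x ->] := letter_lt m_lt.
  by rewrite letter_default // leqNgt m_nlt.
have consumed_marks := consume_marks m_le T_marks.
rewrite !tm_runD; apply: rewind_run (seek_run read mark_m (add0n m) cf_at) _.
  by rewrite consumed_marks.
by move=> j j_lt; rewrite consumed_marks /= (leq_trans j_lt m_le) ltnS ltnW.
Qed.

Lemma sim_inv0 : sim_inv 0 (n.+1 + n.+1).
Proof.
have init_le c : `|reg_mul init_key init_regs c| <= carry_bound%:Z.
  have [_ _ _ init_bounded] := scaled_rep_init.
  apply: le_trans (reg_mul_bound _ c init_bounded) _.
  by rewrite expn0 muln1 /carry_bound PoszM mulrC.
set ka := [ffun c => enc_carry (reg_mul init_key init_regs c)].
have ka_ok : carries_ok ka by move=> c; rewrite ffunE enc_carryK.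
have init_mod : eq_mod_base
    (fun c => reg_mul init_key (tape_num init_tape n.+1) c + dec_carry (ka c))
    (reg_mul init_key init_regs).
  exists (fun=> 0) => c.
  by rewrite ffunE enc_carryK // (reg_mul_ext _ _ tape_num_init) reg_mul0 add0r mul0r addr0.
have init_marks z : (init_tape z).1 = input_marks 0 z by rewrite init_tapeE.
have [T' [cf_at T'_marks T'_rep]] := sweep_round init_cfg (input_marks_frame init_marks)
  ka_ok scaled_rep_init (erefl _) init_mod.
have prefix0 : dva_prefix 0 = ((ddelta (dq0 A) Cent (first_entry (dv A) == 1)).1,
                               dv A *m key_mx init_key).
  by rewrite /dva_prefix take0; exact: (dva_stepE (dq0 A, dv A) Cent).
exists T', (reg_mul init_key init_regs); split => //.
- rewrite tm_runD prefix0; apply: rewind_run cf_at _ => [|j j_lt].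
    by rewrite T'_marks init_marks.
  by rewrite T'_marks init_marks /= j_lt.
- by move=> z; rewrite T'_marks init_marks.
- by rewrite prefix0; exact: scaled_rep_mul scaled_rep_init.
Qed.

Lemma sim_invS m t : (m < n)%N -> sim_inv m t ->
  sim_inv m.+1 (n.+1 + (n.+1 + (m.+1 + (m.+1 + t)))).
Proof.
move=> m_lt [T [U [cf_at T_marks U_rep T_rep]]].
have [x x_m] := letter_lt m_lt.
set q := (dva_prefix m).1 in cf_at; set om := first_entry (dva_prefix m).2 == 1 in cf_at.
have := seek_next (ltnW m_lt) cf_at T_marks; rewrite x_m => sweep_at.
have := consume_marks (ltnW m_lt) T_marks; rewrite x_m => T1_marks.
have T1_rep : tape_rep (consume T m (Some x)) U.
  by case: T_rep => zz T_U; exists zz => c; rewrite tape_num_consume.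
have [T2 [cf2_at T2_marks T2_rep]] := sweep_round sweep_at (input_marks_frame T1_marks)
  carries_ok0 U_rep (ltnW m_lt) (tape_rep_mul _ T1_rep).
have prefixS : dva_prefix m.+1 = ((ddelta q (Letter x) om).1,
                                  (dva_prefix m).2 *m key_mx (q, Some (Some x), om)).
  by rewrite (dva_prefixS m_lt x_m) dva_stepE.
rewrite -tm_runD /after_sweep /= in cf2_at.
exists T2, (reg_mul (q, Some (Some x), om) U); split => //.
- rewrite tm_runD prefixS; apply: rewind_run cf2_at _ => [|j j_lt].
    by rewrite T2_marks T1_marks.
  by rewrite T2_marks T1_marks /= j_lt; case: ifP.
- by move=> z; rewrite T2_marks T1_marks.
- by rewrite prefixS; exact: scaled_rep_mul U_rep.
Qed.

Lemma sim_inv_reach m : (m <= n)%N -> exists2 t, (t <= (4 * m + 2) * n.+1)%N & sim_inv m t.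
Proof.
elim: m => [_ | m IHm m_lt]; first by exists (n.+1 + n.+1); [lia | exact: sim_inv0].
have [t t_le inv] := IHm (ltnW m_lt).
by exists (n.+1 + (n.+1 + (m.+1 + (m.+1 + t)))); [nia | exact: sim_invS].
Qed.

Lemma sim_halts : exists2 t, (t <= (4 * n + 5) * n.+1)%N &
  halting (M := sim_TM) (cstate (tm_run sim_TM w t)) /\
  (cstate (tm_run sim_TM w t) = Accept <-> dva_lang A w).
Proof.
have [t t_le [T [U [cf_at T_marks U_rep T_rep]]]] := sim_inv_reach (leqnn n).
have := seek_next (leqnn n) cf_at T_marks; rewrite letter_default // => sweep_at.
have [T' [cf'_at _ _]] := sweep_round sweep_at (input_marks_frame T_marks)
  carries_ok0 U_rep (ltnSn n.+1) (tape_rep_mul _ T_rep).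
rewrite -tm_runD in cf'_at; case: cf'_at => state_t _ _.
exists (n.+1 + (n.+1 + (n.+1 + t))); first by nia.
rewrite state_t /after_sweep /= /dva_lang dva_run_prefix dva_stepE /=.
case: ifP => [/andP[acc /eqP one] | rej]; first by do 2!split.
by split=> //; split=> // -[acc one]; move: rej; rewrite acc one eqxx.
Qed.

Definition head_ok (s : state) (p : int) : bool :=
  match s with
  | Sweep _ _ _ _ _ | Seek _ _ => 0 <= p
  | Rewind _ _ _ => p < Posz n
  | Accept | Reject => true
  end.

Definition head_inv (cf : config sim_TM) := exists T p,
  [/\ at_cfg cf (cstate cf) T p, -1 <= p <= Posz n, input_frame T & head_ok (cstate cf) p].

Lemma input_frame_blank T p : input_frame T -> -1 <= p <= Posz n ->
  ~~ isSome (T p).1 = (p == -1) || (p == Posz n).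
Proof.
case=> blank_l blank_r marks p_bounds.
apply/idP/idP => [p_blank | /orP[] /eqP->]; rewrite ?blank_l ?blank_r //.
case: p p_bounds p_blank => [j|j] p_bounds p_blank; last by case: j {p_blank} p_bounds.
case: (ltnP j n) => [j_lt | j_ge].
  by move: (marks j j_lt) p_blank; case: (T (Posz j)).1.
by apply/orP; right; move: p_bounds; rewrite eqz_nat lez_nat; lia.
Qed.

Lemma input_frame_set T p y : input_frame T -> isSome y.1 = isSome (T p).1 ->
  input_frame (set_cell T p y).
Proof.
case=> blank_l blank_r marks y_p.
have set_some z : isSome (set_cell T p y z).1 = isSome (T z).1.
  by rewrite /set_cell; case: ifP => [/eqP-> | //].
split.
- by move: (set_some (-1)); rewrite blank_l; case: (set_cell T p y (-1)).1.
- by move: (set_some (Posz n)); rewrite blank_r; case: (set_cell T p y (Posz n)).1.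
- move=> j j_lt; move: (set_some (Posz j)) (marks j j_lt).
  by case: (set_cell T p y (Posz j)).1; case: (T (Posz j)).1.
Qed.

Lemma sim_delta_some s x : isSome (sim_delta s x).1.2.1 = isSome x.1.
Proof. by case: s; case: x => [[[a|]|] ds]. Qed.

Lemma sim_delta_head s x p : ~~ halting (M := sim_TM) s -> head_ok s p -> -1 <= p <= Posz n ->
  ~~ isSome x.1 = (p == -1) || (p == Posz n) ->
  head_ok (sim_delta s x).1.1 (p + move_int (sim_delta s x).2) &&
  (-1 <= p + move_int (sim_delta s x).2 <= Posz n).
Proof.
case: s => [q s om fl ka | q om nx | q om | |] //= _ p_ok p_bounds;
  case: x => [[[a|]|] ds] /= blank; rewrite /after_sweep /after_rewind //=;
  repeat case: ifP => _ //=; try case: nx => [?|] /=; lia.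
Qed.

Lemma head_inv_step cf : head_inv cf -> head_inv (tm_step cf).
Proof.
case=> T [p [cf_at p_bounds frame p_ok]].
have [s_h | s_nh] := boolP (halting (M := sim_TM) (cstate cf)).
  by rewrite (at_cfg_halted cf_at s_h); exists T, p.
have := sim_delta_head s_nh p_ok p_bounds (input_frame_blank frame p_bounds).
have := sim_delta_some (cstate cf) (T p).
case Edelta : (sim_delta (cstate cf) (T p)) => [[s' y] mv] /= y_some /andP[p'_ok p'_bounds].
have cf'_at := at_cfg_step cf_at s_nh Edelta.
have [state' _ _] := cf'_at.
exists (set_cell T p y), (p + move_int mv); rewrite state'; split=> //.
exact: input_frame_set.
Qed.

Lemma head_inv_run t : head_inv (tm_run sim_TM w t).
Proof.
elim: t => [|t IHt]; last by rewrite /tm_run iterS; exact: head_inv_step.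
exists init_tape, 0; split=> //; first exact: init_cfg.
by apply: (@input_marks_frame 0) => z; rewrite init_tapeE.
Qed.

Lemma tm_run_head_bound t i : (`|cpos (tm_run sim_TM w t) i| <= n.+1)%N.
Proof.
have [T [p [[_ pos _] p_bounds _ _]]] := head_inv_run t.
by rewrite pos; move: p_bounds; lia.
Qed.

End Input.
End Simulation.

Theorem theorem8 (Sigma : finType) (k : nat) (A : rtDVA Sigma k.+1) :
  TISP_n3_n (dva_lang A).
Proof.
exists (sim_TM A), 9%N => w.
have [t t_le [halts accepts]] := sim_halts A w.
exists t; split; last split; last split => //.
- apply: leq_trans t_le _; rewrite !expnS expn0 muln1.
  by case: (size w) => [|m] //; nia.
- exact: halts.
- by move=> t' i _; have := tm_run_head_bound w t' i; lia.
Qed.
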